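(* Under assumptions (A1)–(A6), for (almost) every $x$, $$\psi(x) = P(Y(1,0)=0\mid Y(1,1)=1,M(1)=1,X=x)\,P(M(0)=0\mid M(1)=1,X=x),$$ and consequently $$\psi(x)\le P(M(0)=0\mid M(1)=1,X=x) = 1-\frac{\gamma_0(x)}{\gamma_1(x)}.$$
   Context: Observed data $O=(X,A,M,Y)$ with covariates $X\in\mathbb{R}^d$, binary exposure $A$, binary mediator $M$, binary outcome $Y$. For $a,m\in\{0,1\}$, $Y(a,m)$ is the potential outcome under $A=a,M=m$, $M(a)$ the potential mediator, $Y(a):=Y(a,M(a))$, cross-world $Y(a,M(a'))$ by substitution, all on a common probability space with $O$. $\gamma_a(x)=P(M=1\mid A=a,X=x)$. $\psi(x)=P(Y(1,M(0))=0,\,Y(0,M(0))=0\mid Y(1,M(1))=1,M(1)=1,X=x)$. Assumptions: (A1) $A=a,M=m\Rightarrow Y=Y(a,m)$ and $A=a\Rightarrow M=M(a)$. (A2) $Y(1,1)\ge Y(1,0)\ge Y(0,0)$, $Y(1,1)\ge Y(0,1)$, $M(1)\ge M(0)$. (A3) $A\perp\{Y(1,1),Y(1,0),Y(0,1),Y(0,0),M(1),M(0)\}\mid X$. (A4) $\{Y(1,1),Y(1,0),Y(0,1),Y(0,0)\}\perp\{M(1),M(0)\}\mid X$. (A5) for some $\epsilon>0$, $P\{\min_{a,m}P(A=a,M=m\mid X)\ge\epsilon\}=1$. (A6) $P\{P(Y=1\mid A=1,M=1,X)\ge\epsilon\}=1$. *)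

From HB Require Import structures.
From mathcomp Require Import all_boot all_order all_algebra.
From mathcomp Require Import all_classical all_reals all_analysis.
Set Implicit Arguments. Unset Strict Implicit. Unset Printing Implicit Defensive.
Import Order.TTheory GRing.Theory Num.Theory.
Local Open Scope ring_scope.
Local Open Scope classical_set_scope.

(* Binary variables are booleans: true = 1, false = 0. *)

(* The finite "data vector" collecting all binary variables:
   ((A, M, Y), (M(0), M(1)), (Y(0,0), Y(0,1), Y(1,0), Y(1,1))). *)
Definition outcome : finType :=
  ((bool * bool * bool) * (bool * bool) * (bool * bool * bool * bool))%type.

Definition oA (o : outcome) : bool := o.1.1.1.1.
Definition oM (o : outcome) : bool := o.1.1.1.2.
Definition oY (o : outcome) : bool := o.1.1.2.
Definition oMp (a : bool) (o : outcome) : bool := if a then o.1.2.2 else o.1.2.1.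
Definition oYp (a m : bool) (o : outcome) : bool :=
  match a, m with
  | false, false => o.2.1.1.1
  | false, true  => o.2.1.1.2
  | true,  false => o.2.1.2
  | true,  true  => o.2.2
  end.
Definition oMs (o : outcome) : bool * bool := o.1.2.
Definition oYs (o : outcome) : bool * bool * bool * bool := o.2.
Definition oPO (o : outcome) := (oMs o, oYs o).

Definition data (Omega : Type) (A M Y : Omega -> bool) (Mp : bool -> Omega -> bool)
  (Yp : bool -> bool -> Omega -> bool) (w : Omega) : outcome :=
  ((A w, M w, Y w), (Mp false w, Mp true w),
   (Yp false false w, Yp false true w, Yp true false w, Yp true true w)).

(* Conditional probability of an event E of the data vector given X = x,
   computed from a conditional distribution q(x) of the data vector given X = x. *)
Definition cP (R : realType) (T : Type) (q : T -> outcome -> R) (x : T)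
  (E : pred outcome) : R := \sum_(o : outcome | E o) q x o.

Definition ccP (R : realType) (T : Type) (q : T -> outcome -> R) (x : T)
  (E C : pred outcome) : R :=
  cP q x (fun o => E o && C o) / cP q x C.

Definition is_cond_dist (R : realType) (dO : measure_display) (Omega : measurableType dO)
  (P : probability Omega R) (dT : measure_display) (T : measurableType dT)
  (X : Omega -> T) (D : Omega -> outcome) (q : T -> outcome -> R) : Prop :=
  (forall x o, 0 <= q x o) /\
  (forall x, \sum_(o : outcome) q x o = 1) /\
  (forall o, measurable_fun setT (fun x => q x o)) /\
  (forall o (B : set T), measurable B ->
     P (D @^-1` [set o] `&` X @^-1` B) =
     (\int[P]_(w in X @^-1` B) (q (X w) o)%:E)%E).

Definition cindep (R : realType) (T : Type) (U V : eqType) (q : T -> outcome -> R) (x : T)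
  (f : outcome -> U) (g : outcome -> V) : Prop :=
  forall u v, cP q x (fun o => (f o == u) && (g o == v)) =
              cP q x (fun o => f o == u) * cP q x (fun o => g o == v).

Definition gammaX (R : realType) (T : Type) (q : T -> outcome -> R) (a : bool) (x : T) : R :=
  ccP q x (fun o => oM o) (fun o => oA o == a).

Definition psiX (R : realType) (T : Type) (q : T -> outcome -> R) (x : T) : R :=
  ccP q x (fun o => ~~ oYp true (oMp false o) o && ~~ oYp false (oMp false o) o)
          (fun o => oYp true (oMp true o) o && oMp true o).

From HB Require Import structures.
From mathcomp Require Import all_boot all_order all_algebra.
From mathcomp Require Import all_classical all_reals all_analysis.
From mathcomp Require Import measurable_realfun.
Set Implicit Arguments.
Unset Strict Implicit.
Unset Printing Implicit Defensive.
Import Order.TTheory GRing.Theory Num.Theory.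
Local Open Scope ring_scope.
Local Open Scope classical_set_scope.

(* Consistency and monotonicity confine the data vector to a set of
   consistent outcomes, so almost surely the conditional distribution q(X)
   vanishes outside it.  On that set the event of psi reduces to
   {Y(1,0) = 0, Y(1,1) = 1} /\ {M(0) = 0, M(1) = 1}, and the conditional
   independence of the potential outcomes and the potential mediators splits
   the conditional probability into a product of two factors in [0, 1].
   Likewise M(1) >= M(0) and the independence of A from the potential
   variables give gamma_a(x) = P(M(a) = 1 | X = x), whence
   P(M(0) = 0 | M(1) = 1, X = x) = 1 - gamma_0(x) / gamma_1(x). *)

Definition consistent_outcome (o : outcome) : bool :=
  [&& oYp false false o ==> oYp true false o, oYp true false o ==> oYp true true o,
      oYp false true o ==> oYp true true o, oMp false o ==> oMp true o,
      oM o == oMp (oA o) o & oY o == oYp (oA o) (oM o) o].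

Ltac case_outcome := move=> [[[[[] []] []] [[] []]] [[[[] []] []] []]].

Lemma consistent_data (Omega : Type) (A M Y : Omega -> bool)
    (Mp : bool -> Omega -> bool) (Yp : bool -> bool -> Omega -> bool) :
  (forall w a m, A w = a -> M w = m -> Y w = Yp a m w) ->
  (forall w a, A w = a -> M w = Mp a w) ->
  (forall w, (Yp true false w -> Yp true true w) /\
             (Yp false false w -> Yp true false w) /\
             (Yp false true w -> Yp true true w) /\
             (Mp false w -> Mp true w)) ->
  forall w, consistent_outcome (data A M Y Mp Yp w).
Proof.
move=> cY cM mono w; have [m10 [m00 [m01 mM]]] := mono w.
rewrite /consistent_outcome /oA /oM /oY /data /=.
rewrite !(introT implyP) //=.
move: (cM w _ erefl) (cY w _ _ erefl erefl).
by case: (A w) (M w) => [] [] <- ->; rewrite /= !eqxx.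
Qed.

Lemma cond_dist_supported (R : realType) (dO : measure_display)
    (Omega : measurableType dO) (P : probability Omega R)
    (dT : measure_display) (T : measurableType dT) (X : Omega -> T)
    (D : Omega -> outcome) (q : T -> outcome -> R) (S : pred outcome) :
  measurable_fun setT X -> is_cond_dist P X D q -> (forall w, S (D w)) ->
  {ae P, forall w o, ~~ S o -> q (X w) o = 0}.
Proof.
move=> mX [q_ge0 [_ [q_meas q_law]]] SD.
apply: filter_forall => o; have [So|nSo] := boolP (S o); first exact: aeW.
have D_o_empty : D @^-1` [set o] = set0.
  by apply/seteqP; split=> w //= Dw; move: nSo; rewrite -Dw SD.
have mqX : measurable_fun setT (fun w => (q (X w) o)%:E).
  by apply/measurable_EFinP; exact: measurableT_comp (q_meas o) mX.
have int0 : (\int[P]_(w in setT) `|(q (X w) o)%:E| = 0)%E.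
  under eq_integral => w _ do rewrite gee0_abs ?lee_fin //.
  by have := q_law o setT measurableT;
    rewrite preimage_setT setIT D_o_empty measure0 => <-.
move/(ae_eq_integral_abs _ measurableT mqX): int0.
by apply: filterS => w /(_ I) [].
Qed.

Section ConditionalProbability.
Variables (R : realType) (T : Type) (q : T -> outcome -> R) (x : T).
Hypothesis q_ge0 : forall o, 0 <= q x o.

Lemma cP_ge0 (E : pred outcome) : 0 <= cP q x E.
Proof. exact: sumr_ge0. Qed.

Lemma ccP_ge0 (E C : pred outcome) : 0 <= ccP q x E C.
Proof. by rewrite divr_ge0 ?cP_ge0. Qed.

Lemma ccP_predT (C : pred outcome) : cP q x C != 0 -> ccP q x predT C = 1.
Proof. by move=> C0; rewrite /ccP -[X in X / _]/(cP q x C) divff. Qed.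

Lemma cP_partition (U : finType) (f : outcome -> U) (a : pred U) (E : pred outcome) :
  cP q x (fun o => a (f o) && E o) =
  \sum_(u | a u) cP q x (fun o => (f o == u) && E o).
Proof.
rewrite /cP (partition_big f a) /=; last by move=> o /andP[].
apply: eq_bigr => u au; apply: eq_bigl => o.
by case: eqP => [->|]; rewrite ?au ?andbF // andbC.
Qed.

Lemma cindep_cP (U V : finType) (f : outcome -> U) (g : outcome -> V)
    (a : pred U) (b : pred V) :
  cindep q x f g ->
  cP q x (fun o => a (f o) && b (g o)) =
  cP q x (fun o => a (f o)) * cP q x (fun o => b (g o)).
Proof.
move=> fg.
have cP_andT E : cP q x E = cP q x (fun o => E o && true).
  by apply: eq_bigl => o; rewrite andbT.
have cP_andC E F : cP q x (fun o => E o && F o) = cP q x (fun o => F o && E o).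
  by apply: eq_bigl => o; rewrite andbC.
rewrite cP_partition (cP_andT (fun o => a (f o))) cP_partition big_distrl /=.
apply: eq_bigr => u _.
rewrite (cP_andC (fun o => f o == u)) cP_partition.
rewrite (cP_andT (fun o => b (g o))) cP_partition big_distrr /=.
apply: eq_bigr => v _.
by rewrite cP_andC -!cP_andT fg.
Qed.

Lemma ccP_cindep (U V : finType) (f : outcome -> U) (g : outcome -> V)
    (a c : pred U) (b d : pred V) :
  cindep q x f g ->
  ccP q x (fun o => a (f o) && b (g o)) (fun o => c (f o) && d (g o)) =
  ccP q x (fun o => a (f o)) (fun o => c (f o)) *
  ccP q x (fun o => b (g o)) (fun o => d (g o)).
Proof.
move=> fg; rewrite /ccP.
have -> : cP q x (fun o => (a (f o) && b (g o)) && (c (f o) && d (g o))) =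
          cP q x (fun o => (a (f o) && c (f o)) && (b (g o) && d (g o))).
  by apply: eq_bigl => o; rewrite andbACA.
rewrite (cindep_cP (fun u => a u && c u) (fun v => b v && d v) fg).
by rewrite (cindep_cP c d fg) invfM mulrACA.
Qed.

Lemma cP_splitI (E F : pred outcome) :
  cP q x E = cP q x (fun o => F o && E o) + cP q x (fun o => ~~ F o && E o).
Proof.
by rewrite /cP (bigID F) /=; congr (_ + _); apply: eq_bigl => o; rewrite andbC.
Qed.

Lemma cP_le_support (S : pred outcome) (E F : pred outcome) :
  (forall o, ~~ S o -> q x o = 0) ->
  (forall o, S o -> E o -> F o) -> cP q x E <= cP q x F.
Proof.
move=> q_supp EF; rewrite /cP [leLHS]big_mkcond [leRHS]big_mkcond /=.
apply: ler_sum => o _; have [So|nSo] := boolP (S o).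
  by case: ifP => [/(EF o So) ->|_] //; case: ifP.
by rewrite q_supp //; case: ifP; case: ifP.
Qed.

Lemma cP_eq_support (S : pred outcome) (E F : pred outcome) :
  (forall o, ~~ S o -> q x o = 0) ->
  (forall o, S o -> E o = F o) -> cP q x E = cP q x F.
Proof.
move=> q_supp EF; apply/le_anti/andP.
by split; apply: (cP_le_support q_supp) => o So; rewrite EF.
Qed.

Lemma ccP_le1 (E C : pred outcome) : ccP q x E C <= 1.
Proof.
have [C0|C0] := eqVneq (cP q x C) 0; first by rewrite /ccP C0 invr0 mulr0.
have Cpos : 0 < cP q x C by rewrite lt0r C0 cP_ge0.
rewrite /ccP ler_pdivrMr // mul1r.
by apply: (@cP_le_support predT) => // o _ /andP[].
Qed.

End ConditionalProbability.

Section ConsistentOutcomes.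
Variables (R : realType) (T : Type) (q : T -> outcome -> R) (x : T).
Hypotheses (q_ge0 : forall o, 0 <= q x o)
  (q_consistent : forall o, ~~ consistent_outcome o -> q x o = 0)
  (A_indep : cindep q x oA oPO) (PO_indep : cindep q x oYs oMs)
  (overlap : forall a m : bool, 0 < cP q x (fun o => (oA o == a) && (oM o == m))).

Lemma cP_A_neq0 (a : bool) : cP q x (fun o => oA o == a) != 0.
Proof.
apply/lt0r_neq0/(lt_le_trans (overlap a a)).
by apply: (cP_le_support (S := predT) q_ge0) => // o _ /andP[].
Qed.

Lemma cP_M1_neq0 : cP q x (fun o => oMp true o) != 0.
Proof.
apply/lt0r_neq0/(lt_le_trans (overlap true true)).
by apply: (cP_le_support (S := consistent_outcome) q_ge0 q_consistent); case_outcome.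
Qed.

Lemma gammaX_consistent (a : bool) : gammaX q a x = cP q x (fun o => oMp a o).
Proof.
rewrite /gammaX /ccP.
have -> : cP q x (fun o => oM o && (oA o == a)) =
          cP q x (fun o => (oA o == a) && (if a then (oPO o).1.2 else (oPO o).1.1)).
  apply: (cP_eq_support (S := consistent_outcome) q_ge0 q_consistent).
  by case: a; case_outcome.
rewrite (cindep_cP (fun u => u == a) (fun v => if a then v.1.2 else v.1.1) A_indep).
by rewrite [X in X / _]mulrC mulfK ?cP_A_neq0.
Qed.

Lemma ccP_M0_given_M1 :
  ccP q x (fun o => ~~ oMp false o) (fun o => oMp true o) =
  1 - gammaX q false x / gammaX q true x.
Proof.
rewrite !gammaX_consistent /ccP.
have -> : cP q x (fun o => ~~ oMp false o && oMp true o) =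
          cP q x (fun o => oMp true o) - cP q x (fun o => oMp false o).
  rewrite (cP_splitI q x (fun o => oMp true o) (fun o => oMp false o)).
  rewrite (cP_eq_support (S := consistent_outcome)
    (E := fun o => oMp false o && oMp true o) (F := fun o => oMp false o)
    q_ge0 q_consistent); last by case_outcome.
  by rewrite addrAC subrr add0r.
by rewrite mulrBl divff ?cP_M1_neq0.
Qed.

Lemma psiX_consistent :
  psiX q x =
  ccP q x (fun o => ~~ oYp true false o) (fun o => oYp true true o && oMp true o) *
  ccP q x (fun o => ~~ oMp false o) (fun o => oMp true o).
Proof.
have -> : psiX q x = ccP q x (fun o => ~~ (oYs o).1.2 && ~~ (oMs o).1)
                             (fun o => (oYs o).2 && (oMs o).2).
  rewrite /psiX /ccP; congr (_ / _);
    by apply: (cP_eq_support (S := consistent_outcome) q_ge0 q_consistent); case_outcome.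
rewrite (ccP_cindep (fun y => ~~ y.1.2) (fun y => y.2) (fun m => ~~ m.1) (fun m => m.2)
  PO_indep).
(* The first factor is itself split, with a trivial event on the mediators. *)
have -> : ccP q x (fun o => ~~ oYp true false o)
                  (fun o => oYp true true o && oMp true o) =
          ccP q x (fun o => ~~ (oYs o).1.2 && predT (oMs o))
                  (fun o => (oYs o).2 && (oMs o).2).
  by rewrite /ccP; congr (_ / _); apply: eq_bigl => o; rewrite andbT.
rewrite (ccP_cindep (fun y => ~~ y.1.2) (fun y => y.2) predT (fun m => m.2) PO_indep).
by rewrite ccP_predT ?mulr1 ?cP_M1_neq0.
Qed.

Lemma psiX_le_ccP_M0 :
  psiX q x <= ccP q x (fun o => ~~ oMp false o) (fun o => oMp true o).
Proof. by rewrite psiX_consistent ler_piMl ?(ccP_ge0 q_ge0) ?(ccP_le1 q_ge0). Qed.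

End ConsistentOutcomes.

Theorem mainTheorem7 (R : realType)
  (dO : measure_display) (Omega : measurableType dO) (P : probability Omega R)
  (dT : measure_display) (T : measurableType dT)
  (X : Omega -> T) (A M Y : Omega -> bool)
  (Mp : bool -> Omega -> bool) (Yp : bool -> bool -> Omega -> bool)
  (q : T -> outcome -> R) :
  measurable_fun setT X ->
  (forall o, measurable (data A M Y Mp Yp @^-1` [set o])) ->
  is_cond_dist P X (data A M Y Mp Yp) q ->
  (* (A1) consistency *)
  (forall w a m, A w = a -> M w = m -> Y w = Yp a m w) ->
  (forall w a, A w = a -> M w = Mp a w) ->
  (* (A2) monotonicity *)
  (forall w, (Yp true false w -> Yp true true w) /\
             (Yp false false w -> Yp true false w) /\
             (Yp false true w -> Yp true true w) /\
             (Mp false w -> Mp true w)) ->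
  (* (A3) A independent of all potential variables given X *)
  {ae P, forall w, cindep q (X w) oA oPO} ->
  (* (A4) potential outcomes independent of potential mediators given X *)
  {ae P, forall w, cindep q (X w) oYs oMs} ->
  (* (A5) and (A6) *)
  (exists eps : R, 0 < eps /\
     {ae P, forall w, forall a m : bool,
        eps <= cP q (X w) (fun o => (oA o == a) && (oM o == m))} /\
     {ae P, forall w, eps <= ccP q (X w) (fun o => oY o) (fun o => oA o && oM o)}) ->
  {ae P, forall w,
     psiX q (X w) =
       ccP q (X w) (fun o => ~~ oYp true false o) (fun o => oYp true true o && oMp true o)
       * ccP q (X w) (fun o => ~~ oMp false o) (fun o => oMp true o)
     /\ psiX q (X w) <= ccP q (X w) (fun o => ~~ oMp false o) (fun o => oMp true o)
     /\ ccP q (X w) (fun o => ~~ oMp false o) (fun o => oMp true o)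
        = 1 - gammaX q false (X w) / gammaX q true (X w)}.
Proof.
move=> mX _ qX cY cM mono A_indep PO_indep [eps [eps_gt0 [overlap _]]].
have [q_ge0 _] := qX.
have q_consistent := cond_dist_supported mX qX (consistent_data cY cM mono).
have overlap_gt0 : {ae P, forall w, forall a m : bool,
    0 < cP q (X w) (fun o => (oA o == a) && (oM o == m))}.
  by apply: filterS overlap => w eps_le a m; exact: lt_le_trans (eps_le a m).
apply: filter_app3 A_indep PO_indep overlap_gt0.
apply: filterS q_consistent => w q_cons A_ind PO_ind ovl.
split; first exact: psiX_consistent.
split; first exact: psiX_le_ccP_M0.
exact: ccP_M0_given_M1.
Qed.
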